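(* Let $n\ge 3$ be finite and let $\mathfrak D$ be a polyadic equality algebra of dimension $n$ that is generated by the set $\{x\in D:\Delta x\neq n\}$. If the diagonal free reduct $\mathfrak{Rd}_{df}\mathfrak D$ is completely representable, then $\mathfrak D$ is completely representable.
   Context: For an element $x$ of an algebra of dimension $n$, $\Delta x=\{i<n: \mathsf c_ix\neq x\}$ is its dimension set. $\mathfrak{Rd}_{df}\mathfrak D$ is the reduct of $\mathfrak D$ obtained by discarding diagonal elements and substitutions, a diagonal free cylindric algebra. An algebra is completely representable if there is an injective homomorphism into a product of set algebras of the appropriate type (for diagonal free algebras, with units of the form $\prod_{i<n}U_i$) preserving all existing suprema. *)

From mathcomp Require Import all_boot.
Set Implicit Arguments. Unset Strict Implicit. Unset Printing Implicit Defensive.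

Record pea_sig (n : nat) := PeaSig {
  car :> Type;
  bjoin : car -> car -> car;
  bmeet : car -> car -> car;
  bcompl : car -> car;
  bzero : car;
  bone : car;
  cyl : {set 'I_n} -> car -> car;
  subst : ('I_n -> 'I_n) -> car -> car;
  diag : 'I_n -> 'I_n -> car
}.
Arguments bjoin {n} p _ _.  Arguments bmeet {n} p _ _.  Arguments bcompl {n} p _.
Arguments bzero {n} p.  Arguments bone {n} p.  Arguments cyl {n} p _ _.
Arguments subst {n} p _ _.  Arguments diag {n} p _ _.

Section PEA.
Variables (n : nat) (D : pea_sig n).

Local Notation "x + y" := (bjoin D x y).
Local Notation "x * y" := (bmeet D x y).
Local Notation "- x" := (bcompl D x).
Local Notation "0" := (bzero D).
Local Notation "1" := (bone D).

Definition ble (x y : D) : Prop := x + y = y.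

Definition boolean_axioms : Prop :=
  ( (forall x y : D, x + y = y + x) /\
      (forall x y : D, x * y = y * x) /\
      (forall x y z : D, x + (y + z) = (x + y) + z) /\
      (forall x y z : D, x * (y * z) = (x * y) * z) /\
      (forall x y : D, x + (x * y) = x) /\
      (forall x y : D, x * (x + y) = x) /\
      (forall x y z : D, x * (y + z) = (x * y) + (x * z)) /\
      (forall x : D, x + - x = 1) /\
      (forall x : D, x * - x = 0)).

Definition repl (i j : 'I_n) : 'I_n -> 'I_n := fun k => if k == i then j else k.

(* Halmos' axioms (P1)-(P12) for polyadic algebras and (E1)-(E3)
   for polyadic equality algebras (Henkin-Monk-Tarski, Part II, 5.4.1). *)
Definition is_PEA : Prop :=
  ( boolean_axioms /\
      (forall G, cyl D G 0 = 0) /\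
      (forall G (x : D), x + cyl D G x = cyl D G x) /\
      (forall G (x y : D), cyl D G (x * cyl D G y) = cyl D G x * cyl D G y) /\
      (forall x : D, cyl D set0 x = x) /\
      (forall G H (x : D), cyl D (G :|: H) x = cyl D G (cyl D H x)) /\
      (forall x : D, subst D id x = x) /\
      (forall s t (x : D), subst D (s \o t) x = subst D s (subst D t x)) /\
      (forall t (x y : D), subst D t (x + y) = subst D t x + subst D t y) /\
      (forall t (x : D), subst D t (- x) = - subst D t x) /\
      (forall s t (G : {set 'I_n}) (x : D), (forall i, i \notin G -> s i = t i) ->
         subst D s (cyl D G x) = subst D t (cyl D G x)) /\
      (forall t (G : {set 'I_n}) (x : D),
         (forall i j, t i \in G -> t j \in G -> t i = t j -> i = j) ->
         cyl D G (subst D t x) = subst D t (cyl D [set i | t i \in G] x)) /\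
      (forall t i j, subst D t (diag D i j) = diag D (t i) (t j)) /\
      (forall i, diag D i i = 1) /\
      (forall i j (x : D), ble (x * diag D i j) (subst D (repl i j) x))).

Definition cyl1 (i : 'I_n) (x : D) : D := cyl D [set i] x.

(* i ∈ Δx  iff  c_i x <> x ;  "Δx ≠ n" means Δx is not all of {0,..,n-1} *)
Definition in_dimset (x : D) (i : 'I_n) : Prop := cyl1 i x <> x.
Definition dimset_not_full (x : D) : Prop := ~ (forall i : 'I_n, in_dimset x i).

Definition subuniverse (P : D -> Prop) : Prop :=
  ( P 0 /\ P 1 /\
      (forall x y, P x -> P y -> P (x + y)) /\
      (forall x y, P x -> P y -> P (x * y)) /\
      (forall x, P x -> P (- x)) /\
      (forall G x, P x -> P (cyl D G x)) /\
      (forall t x, P x -> P (subst D t x)) /\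
      (forall i j, P (diag D i j))).

Definition generated_by (X : D -> Prop) : Prop :=
  forall P : D -> Prop, subuniverse P -> (forall x, X x -> P x) -> forall x, P x.

Definition is_sup (X : D -> Prop) (a : D) : Prop :=
  (forall x, X x -> ble x a) /\ (forall b, (forall x, X x -> ble x b) -> ble a b).

(* Complete representability of D as a polyadic equality algebra:
   an injective homomorphism into a product (indexed by K) of polyadic
   equality set algebras with units U_k^n, preserving all existing
   suprema.  Subsets of U_k^n are predicates; the product is
   represented componentwise. *)
Definition completely_representable : Prop :=
  exists (K : Type) (U : K -> Type) (f : D -> forall k, ('I_n -> U k) -> Prop),
    ( (forall x y k s, f (x + y) k s <-> f x k s \/ f y k s) /\
        (forall x y k s, f (x * y) k s <-> f x k s /\ f y k s) /\
        (forall x k s, f (- x) k s <-> ~ f x k s) /\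
        (forall k s, f 0 k s <-> False) /\
        (forall k s, f 1 k s <-> True) /\
        (forall G x k s, f (cyl D G x) k s <->
           exists t : 'I_n -> U k, (forall i, i \notin G -> t i = s i) /\ f x k t) /\
        (forall tau x k s, f (subst D tau x) k s <-> f x k (s \o tau)) /\
        (forall i j k s, f (diag D i j) k s <-> s i = s j) /\
        (forall x y, (forall k s, f x k s <-> f y k s) -> x = y) /\
        (forall X a, is_sup X a ->
           forall k s, f a k s <-> exists x, X x /\ f x k s)).

(* Complete representability of the diagonal free reduct Rd_df D
   (Boolean operations and c_i, i < n): an injective homomorphism into a
   product of diagonal free cylindric set algebras with units
   prod_(i<n) U_(k,i), preserving all existing suprema. *)
Definition df_completely_representable : Prop :=
  exists (K : Type) (U : K -> 'I_n -> Type)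
         (f : D -> forall k, (forall i : 'I_n, U k i) -> Prop),
    ( (forall x y k s, f (x + y) k s <-> f x k s \/ f y k s) /\
        (forall x y k s, f (x * y) k s <-> f x k s /\ f y k s) /\
        (forall x k s, f (- x) k s <-> ~ f x k s) /\
        (forall k s, f 0 k s <-> False) /\
        (forall k s, f 1 k s <-> True) /\
        (forall i x k s, f (cyl1 i x) k s <->
           exists t : (forall j : 'I_n, U k j),
             (forall j, j != i -> t j = s j) /\ f x k t) /\
        (forall x y, (forall k s, f x k s <-> f y k s) -> x = y) /\
        (forall X a, is_sup X a ->
           forall k s, f a k s <-> exists x, X x /\ f x k s)).

End PEA.

(* Start from a complete representation f of the reduct, with
   units prod_(i<n) U k i.  In each factor k the diagonals d_ij define a
   relation "value u at coordinate i equals value v at coordinate j"; for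
   n >= 3 it extends to an equivalence ev on the disjoint union of the U k i
   (section Gluing).  Each element has its f-image invariant under ev: this
   holds for generators, which have a free coordinate l and can be moved
   through l via [i/l]y = c_i (d_il . y), and is preserved by all
   operations.  Hence the ev-classes W k form a common base set, and x is
   represented by the sequences of classes whose representatives lie in
   f x k.  Booleans, cylindrifications and suprema carry over from f,
   diagonals become equalities by construction, and substitutions become
   precompositions: replacements [i/j] by the formula above, transpositions
   on generators as products of replacements, arbitrary maps by induction on
   their support, and then all elements by induction along the generators. *)

From mathcomp Require Import all_boot.
From Stdlib Require Import FunctionalExtensionality ProofIrrelevance Classical ClassicalEpsilon PropExtensionality.
Unset Printing Implicit Defensive.

Section Update.
Context {I : eqType} {V : I -> Type}.

Definition upd (t : forall i, V i) (j : I) (v : V j) : forall i, V i :=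
  fun i => match j =P i with ReflectT e => eq_rect j V v i e | ReflectF _ => t i end.

Lemma upd_eq t j v : upd t j v j = v.
Proof.
rewrite /upd; case: (j =P j) => [e|//].
by rewrite (eq_irrelevance e erefl).
Qed.

Lemma upd_neq t j v i : i != j -> upd t j v i = t i.
Proof. by move=> ij; rewrite /upd; case: (j =P i) => // e; rewrite e eqxx in ij. Qed.

Lemma agree_upd {r t : forall i, V i} {i} :
  (forall a, a != i -> r a = t a) -> r = upd t i (r i).
Proof.
move=> rt; apply: functional_extensionality_dep => a.
by case: (eqVneq a i) => [->|ai]; [rewrite upd_eq | rewrite upd_neq // rt].
Qed.

Lemma upd_same t j : upd t j (t j) = t.
Proof. by rewrite -agree_upd. Qed.

Lemma upd_upd t j v v' : upd (upd t j v) j v' = upd t j v'.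
Proof.
apply: functional_extensionality_dep => i.
by case: (eqVneq i j) => [->|ij]; [rewrite !upd_eq | rewrite !upd_neq].
Qed.

Lemma upd_comm t i l u v : i != l -> upd (upd t l v) i u = upd (upd t i u) l v.
Proof.
move=> il; apply: functional_extensionality_dep => a.
case: (eqVneq a i) => [e|ai]; first by subst a; rewrite upd_eq upd_neq // upd_eq.
case: (eqVneq a l) => [e|al]; first by subst a; rewrite upd_neq // !upd_eq.
by rewrite !upd_neq.
Qed.
End Update.
Arguments upd {I V} t j v i.

Lemma coordinatewise_ind {n} {V : 'I_n -> Type} (R : forall i, V i -> V i -> Prop)
    (g : (forall i, V i) -> Prop) :
  (forall t i u, R i (t i) u -> g t -> g (upd t i u)) ->
  forall s s', (forall i, R i (s i) (s' i)) -> g s -> g s'.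
Proof.
move=> step s s' Rss' gs.
pose mix (m : nat) : forall i, V i := fun i => if (i < m)%N then s' i else s i.
have mix_n : mix n = s' by apply: functional_extensionality_dep => i; rewrite /mix ltn_ord.
have mix_S m (mn : (m < n)%N) : mix m.+1 = upd (mix m) (Ordinal mn) (s' (Ordinal mn)).
  apply: functional_extensionality_dep => i; rewrite /mix.
  case: (eqVneq i (Ordinal mn)) => [->|ne]; first by rewrite upd_eq /= ltnSn.
  rewrite upd_neq // ltnS leq_eqVlt.
  suff /negbTE -> : val i != m by [].
  by apply: contra ne => /eqP im; apply/eqP/val_inj.
suff: forall m, (m <= n)%N -> g (mix m) by move/(_ n (leqnn n)); rewrite mix_n.
elim=> [_|m IH mn]; first by have -> : mix 0 = s by apply: functional_extensionality_dep.
rewrite mix_S; apply: step; last exact/IH/ltnW.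
by rewrite /mix ltnn.
Qed.

Lemma neqC (T : eqType) (a b : T) : a != b -> b != a.
Proof. by rewrite eq_sym. Qed.
Arguments neqC {T a b}.

Lemma third_index n (n3 : (2 < n)%N) (i j : 'I_n) : exists l : 'I_n, l != i /\ l != j.
Proof.
apply: NNPP => none.
have cover : [set: 'I_n] \subset [set i; j].
  apply/subsetP => l _; rewrite !inE; apply/negPn/negP; rewrite negb_or => /andP [li lj].
  by apply: none; exists l.
have := subset_leq_card cover; rewrite cardsT card_ord cards2.
by case: (i != j) => le; move: (leq_trans n3 le).
Qed.
Arguments third_index {n} n3 i j.

Lemma finset_ind (T : finType) (P : {set T} -> Prop) :
  P set0 -> (forall i G, P G -> P (i |: G)) -> forall G, P G.
Proof.
move=> P0 PU G; move: {2}#|G| (erefl #|G|) => N; elim: N G => [|N IH] G cardG.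
  by move/eqP: cardG; rewrite cards_eq0 => /eqP ->.
have [i iG] : exists i, i \in G by apply/set0Pn; rewrite -card_gt0 cardG.
rewrite -(setD1K iG); apply/PU/IH.
by move: cardG; rewrite (cardsD1 i G) iG => -[].
Qed.

Definition swap {n} (i j : 'I_n) : 'I_n -> 'I_n :=
  fun a => if a == i then j else if a == j then i else a.

Lemma swapK {n} (i j : 'I_n) : cancel (swap i j) (swap i j).
Proof.
move=> a; rewrite /swap; case: (eqVneq a i) => [->|ai]; first by rewrite eqxx; case: eqP.
by case: (eqVneq a j) => [->|aj]; rewrite ?eqxx // (negbTE ai) (negbTE aj).
Qed.

Definition supp {n} (t : 'I_n -> 'I_n) := [set a | t a != a].

Lemma supp_factor {n} (t : 'I_n -> 'I_n) i : t i != i -> exists t1 r, [/\ t = t1 \o r,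
  (#|supp t1| < #|supp t|)%N & r = repl i (t i) \/ r = swap i (t i)].
Proof.
move=> ti.
have shrink (t1 : 'I_n -> 'I_n) b : (forall a, t1 a != a -> t a != a) ->
    t b != b -> t1 b = b -> (#|supp t1| < #|supp t|)%N.
  move=> sub tb t1b; apply: proper_card; apply/properP; split.
    by apply/subsetP => a; rewrite !inE; apply: sub.
  by exists b; rewrite !inE // t1b eqxx.
case: (eqVneq (t (t i)) (t i)) => [tti|tti].
  exists (fun a => if a == i then i else t a), (repl i (t i)); split; last by left.
  - apply: functional_extensionality => a; rewrite /= /repl.
    case: (eqVneq a i) => [ai|ai]; first by subst a; rewrite (negbTE ti) tti.
    by rewrite (negbTE ai).
  - apply: (shrink _ i) => //; last by rewrite eqxx.
    by move=> a; case: (a =P i) => [->|_]; rewrite ?eqxx.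
exists (t \o swap i (t i)), (swap i (t i)); split; last by right.
  by apply: functional_extensionality => a; rewrite /= swapK.
apply: (shrink _ (t i)) => //; last by rewrite /= /swap eqxx (negbTE ti).
move=> a; rewrite /= /swap; case: (eqVneq a i) => [ai|ai]; first by subst a.
by case: (eqVneq a (t i)) => [a_ti|//]; rewrite a_ti.
Qed.

(* Gluing coordinates.  Let E i j u v (for i <> j) say that the value u in
   coordinate i "equals" the value v in coordinate j, and assume E is
   symmetric, total and transitive along pairwise distinct indices.  Then
   eqv below, defined through a common witness at a third coordinate, is an
   equivalence relation on the disjoint union of the V i which extends E. *)
Section Gluing.
Variables (n : nat) (n3 : (2 < n)%N) (V : 'I_n -> Type).
Variable E : forall i j, V i -> V j -> Prop.
Hypothesis E_sym : forall {i j u v}, i != j -> E i j u v -> E j i v u.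
Hypothesis E_total : forall i j u, i != j -> exists v, E i j u v.
Hypothesis E_trans : forall {i j l u v w},
  i != j -> j != l -> i != l -> E i j u v -> E j l v w -> E i l u w.

Definition eqv i (u : V i) j (v : V j) :=
  exists l w, [/\ l != i, l != j, E i l u w & E j l v w].

Lemma eqv_refl i u : eqv i u i u.
Proof.
have [l [li _]] := third_index n3 i i; have [w Ew] := E_total i l u (neqC li).
by exists l, w.
Qed.

Lemma eqv_sym {i u j v} : eqv i u j v -> eqv j v i u.
Proof. by case=> l [w [li lj Ei Ej]]; exists l, w. Qed.

Lemma eqv_E i u j v : i != j -> eqv i u j v <-> E i j u v.
Proof.
move=> ij; split.
  case=> l [w [li lj Eil Ejl]].
  by apply: E_trans Eil (E_sym _ Ejl); rewrite // eq_sym.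
move=> Eij; have [l [li lj]] := third_index n3 i j.
have [w Ejl] := E_total j l v (neqC lj).
exists l, w; split=> //.
by apply: E_trans Eij Ejl; rewrite // eq_sym.
Qed.

Lemma eqv_same_partners {i u j v} : eqv i u j v ->
  forall {q y}, q != i -> q != j -> E i q u y -> E j q v y.
Proof.
move=> uv q y qi qj Eiq.
case: (eqVneq i j) => [eij|ij]; last first.
  have Eij := (eqv_E i u j v ij).1 uv.
  exact: E_trans (neqC ij) (neqC qi) (neqC qj) (E_sym ij Eij) Eiq.
subst j; case: uv => l [w [li _ Eil Evl]].
case: (eqVneq q l) => [eql|ql].
  subst q; have [m [mi ml]] := third_index n3 i l.
  have [z Elm] := E_total l m w (neqC ml).
  have Eim : E i m u z := E_trans (neqC li) (neqC ml) (neqC mi) Eil Elm.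
  have Eim' : E i m v z := E_trans (neqC li) (neqC ml) (neqC mi) Evl Elm.
  have Elm' : E l m y z := E_trans li (neqC mi) (neqC ml) (E_sym (neqC li) Eiq) Eim.
  exact: E_sym li (E_trans (neqC ml) mi li Elm' (E_sym (neqC mi) Eim')).
have Eql : E q l y w := E_trans qi (neqC li) ql (E_sym (neqC qi) Eiq) Eil.
exact: E_sym qi (E_trans ql li qi Eql (E_sym (neqC li) Evl)).
Qed.

Lemma eqv_trans i u j v m x : eqv i u j v -> eqv j v m x -> eqv i u m x.
Proof.
move=> uv vx; case: (boolP ((j == i) || (j == m))) => [jim|].
  have [q [qi qm]] := third_index n3 i m.
  have qj : q != j by case/orP: jim => /eqP ->.
  have [y Eiq] := E_total i q u (neqC qi).
  have Ejq := eqv_same_partners uv qi qj Eiq.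
  by exists q, y; split=> //; exact: (eqv_same_partners vx qj qm Ejq).
rewrite negb_or => /andP [ji jm]; exists j, v; split=> //.
  exact: (eqv_E i u j v (neqC ji)).1 uv.
exact: (eqv_E m x j v (neqC jm)).1 (eqv_sym vx).
Qed.

Lemma eqv_common_partner i u u' : eqv i u i u' ->
  forall l, l != i -> exists v, E i l u v /\ E i l u' v.
Proof.
move=> uu' l li; have [v Eil] := E_total i l u (neqC li).
by exists v; split=> //; exact: (eqv_same_partners uu' li li Eil).
Qed.
End Gluing.

(* From now on D is a polyadic equality algebra of dimension n >= 3 together with a complete representation f of its diagonal free
   reduct: f x k is a subset of the product of the sets U k i, i < n. *)
Section Representation.
Variables (n : nat) (D : pea_sig n).
Hypothesis n3 : (2 < n)%N.
Hypothesis P5 : forall x : D, cyl D set0 x = x.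
Hypothesis P6 : forall G H (x : D), cyl D (G :|: H) x = cyl D G (cyl D H x).
Hypothesis P7 : forall x : D, subst D id x = x.
Hypothesis P8 : forall s t (x : D), subst D (s \o t) x = subst D s (subst D t x).
Hypothesis P9 : forall t (x y : D),
  subst D t (bjoin D x y) = bjoin D (subst D t x) (subst D t y).
Hypothesis P10 : forall t (x : D), subst D t (bcompl D x) = bcompl D (subst D t x).
Hypothesis P11 : forall s t (G : {set 'I_n}) (x : D),
  (forall i, i \notin G -> s i = t i) -> subst D s (cyl D G x) = subst D t (cyl D G x).
Hypothesis P12 : forall t (G : {set 'I_n}) (x : D),
  (forall i j, t i \in G -> t j \in G -> t i = t j -> i = j) ->
  cyl D G (subst D t x) = subst D t (cyl D [set i | t i \in G] x).
Hypothesis E1 : forall t i j, subst D t (diag D i j) = diag D (t i) (t j).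
Hypothesis E2 : forall i, diag D i i = bone D.
Hypothesis E3 : forall i j (x : D), ble (bmeet D x (diag D i j)) (subst D (repl i j) x).

(* c_G is the composite of the c_i, i in G: its meaning in any semantics
   interpreting each c_i as a cylindrification is cylindrification along G. *)
Lemma cyl_sem (V : 'I_n -> Type) (g : D -> (forall i, V i) -> Prop) :
  (forall i x s, g (cyl1 i x) s <-> exists t, (forall j, j != i -> t j = s j) /\ g x t) ->
  forall G x s, g (cyl D G x) s <-> exists t, (forall j, j \notin G -> t j = s j) /\ g x t.
Proof.
move=> g_cyl1; elim/finset_ind => [|i G IH] x s.
  rewrite P5; split=> [gs|[t [ts gt]]]; first by exists s.
  by have -> : s = t by apply: functional_extensionality_dep => j; rewrite ts ?inE.
rewrite P6 -/(cyl1 i _) g_cyl1; split.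
  case=> r [rs]; rewrite IH => -[t [tr gt]]; exists t; split=> // j.
  rewrite !inE negb_or => /andP [ji jG]; by rewrite tr // rs.
case=> t [ts gt]; exists (upd s i (t i)); split=> [j ji|]; first by rewrite upd_neq.
apply/IH; exists t; split=> // j jG.
case: (eqVneq j i) => [->|ji]; first by rewrite upd_eq.
by rewrite upd_neq // ts // !inE negb_or ji.
Qed.

Lemma cyl_closed (P : D -> Prop) :
  (forall i x, P x -> P (cyl1 i x)) -> forall G x, P x -> P (cyl D G x).
Proof.
move=> P_cyl1; elim/finset_ind => [|i G IH] x Px; first by rewrite P5.
by rewrite P6; apply/P_cyl1/IH.
Qed.

Lemma subuniverse_of (P : D -> Prop) :
  P (bzero D) -> P (bone D) ->
  (forall x y, P x -> P y -> P (bjoin D x y)) ->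
  (forall x y, P x -> P y -> P (bmeet D x y)) ->
  (forall x, P x -> P (bcompl D x)) ->
  (forall i x, P x -> P (cyl1 i x)) ->
  (forall t x, P x -> P (subst D t x)) ->
  (forall i j, P (diag D i j)) -> subuniverse P.
Proof. by move=> *; do !split=> //; apply: cyl_closed. Qed.

(* Commuting a substitution past c_i (P11, P12): s_t c_i x = c_m s_t' x,
   where t' agrees with t off i and sends i to a value m that t does not
   take on the other coordinates (these have at most n - 1 images). *)
Lemma subst_cyl1 t i (x : D) : exists m t', [/\ t' i = m,
   (forall a, a != i -> t' a = t a), (forall a, a != i -> t a != m)
   & subst D t (cyl1 i x) = cyl1 m (subst D t' x)].
Proof.
have [m m_fresh] : exists m, m \notin t @: [set~ i].
  apply/existsP; rewrite -negb_forall; apply/negP => /forallP all_hit.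
  have : (#|[set: 'I_n]| <= #|t @: [set~ i]|)%N.
    by apply/subset_leq_card/subsetP => a _; apply: all_hit.
  rewrite cardsT card_ord => le_n; have := leq_trans le_n (leq_imset_card t _).
  rewrite cardsC1 card_ord => le_pred; suff : (n.-1 < n)%N by rewrite ltnNge le_pred.
  by rewrite ltn_predL (ltn_trans _ n3).
have tm a : a != i -> t a != m.
  by move=> ai; apply: contra m_fresh => /eqP <-; rewrite imset_f // !inE.
pose t' a := if a == i then m else t a.
have t'i : t' i = m by rewrite /t' eqxx.
have t'a a : a != i -> t' a = t a by rewrite /t' => /negbTE ->.
have t'_inj_m a : t' a \in [set m] -> a = i.
  by rewrite inE; case: (eqVneq a i) => // ai; rewrite t'a // (negbTE (tm a ai)).
exists m, t'; split=> //.
rewrite /cyl1 (P11 t t') => [|a]; last by rewrite inE => /t'a.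
rewrite P12 => [|a b /t'_inj_m -> /t'_inj_m ->] //.
congr (subst D t' (cyl D _ x)); apply/setP => a; rewrite !inE.
by case: (eqVneq a i) => [->|ai]; [rewrite t'i eqxx | rewrite t'a // (negbTE (tm a ai))].
Qed.

Lemma subst_free l (y : D) t : cyl1 l y = y -> exists m, cyl1 m (subst D t y) = subst D t y.
Proof.
move=> ly; have [m [t' [_ _ _ tcyl]]] := subst_cyl1 t l y.
by exists m; rewrite -ly tcyl /cyl1 -P6 setUid.
Qed.

Lemma not_full_free (y : D) : dimset_not_full y -> exists l, cyl1 l y = y.
Proof. by move=> not_full; apply: NNPP => none; apply: not_full => i yi; apply: none; exists i. Qed.

Lemma cyl1_subst_repl a b x : a != b -> cyl1 a (subst D (repl a b) x) = subst D (repl a b) x.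
Proof.
move=> ab; have repl_a i : repl a b i != a.
  by rewrite /repl; case: ifP => [_|/negbT //]; exact: neqC.
rewrite /cyl1 P12 => [|i j]; last by rewrite inE (negbTE (repl_a i)).
suff -> : [set i | repl a b i \in [set a]] = set0 by rewrite P5.
by apply/setP => i; rewrite !inE (negbTE (repl_a i)).
Qed.

Lemma cyl1_diag l i j : l != i -> l != j -> cyl1 l (diag D i j) = diag D i j.
Proof.
move=> li lj; have fixed : subst D (repl l i) (diag D i j) = diag D i j.
  by rewrite E1 /repl (negbTE (neqC li)) (negbTE (neqC lj)).
by rewrite -{1}fixed cyl1_subst_repl.
Qed.

Variables (K : Type) (U : K -> 'I_n -> Type).
Variable f : D -> forall k, (forall i : 'I_n, U k i) -> Prop.
Hypothesis f_join : forall x y k s, f (bjoin D x y) k s <-> f x k s \/ f y k s.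
Hypothesis f_meet : forall x y k s, f (bmeet D x y) k s <-> f x k s /\ f y k s.
Hypothesis f_compl : forall x k s, f (bcompl D x) k s <-> ~ f x k s.
Hypothesis f_zero : forall k s, f (bzero D) k s <-> False.
Hypothesis f_one : forall k s, f (bone D) k s <-> True.
Hypothesis f_cyl1 : forall i x k s, f (cyl1 i x) k s <->
  exists t : (forall j : 'I_n, U k j), (forall j, j != i -> t j = s j) /\ f x k t.
Hypothesis f_inj : forall x y, (forall k s, f x k s <-> f y k s) -> x = y.

(* Since f is injective, order and Boolean identities of D may be checked
   pointwise in the representation. *)
Lemma ble_sem (x y : D) : ble x y <-> forall k s, f x k s -> f y k s.
Proof.
split=> [xy k s fx|xy]; first by rewrite -xy f_join; left.
by apply: f_inj => k s; rewrite f_join; split=> [[/xy|]|] //; right.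
Qed.

Lemma f_cyl1_upd i x k s : f (cyl1 i x) k s <-> exists u, f x k (upd s i u).
Proof.
rewrite f_cyl1; split=> [[t [ts ft]]|[u fu]]; first by exists (t i); rewrite -(agree_upd ts).
by exists (upd s i u); split=> // j ji; rewrite upd_neq.
Qed.

Lemma meet_as_join (x y : D) : bmeet D x y = bcompl D (bjoin D (bcompl D x) (bcompl D y)).
Proof.
apply: f_inj => k s; rewrite f_meet f_compl f_join !f_compl.
split=> [[fx fy] [] //|not_either].
by split; apply: NNPP => nf; apply: not_either; [left|right].
Qed.

Lemma subst_meet t (x y : D) : subst D t (bmeet D x y) = bmeet D (subst D t x) (subst D t y).
Proof. by rewrite !meet_as_join P10 P9 !P10. Qed.

Lemma subst_one t : subst D t (bone D) = bone D.
Proof.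
have one_em : bone D = bjoin D (bone D) (bcompl D (bone D)).
  by apply: f_inj => k s; rewrite f_join f_compl !f_one; tauto.
apply: f_inj => k s; rewrite {1}one_em P9 P10 f_join f_compl f_one.
by split=> // _; apply: classic.
Qed.

Lemma subst_zero t : subst D t (bzero D) = bzero D.
Proof.
have zero_compl : bzero D = bcompl D (bone D).
  by apply: f_inj => k s; rewrite f_compl f_zero f_one.
by rewrite zero_compl P10 subst_one.
Qed.

Lemma subst_repl_of_diag i j x k s :
  f x k s -> f (diag D i j) k s -> f (subst D (repl i j) x) k s.
Proof. by move=> fx fd; apply: (ble_sem _ _).1 (E3 i j x) _ _ _; apply/f_meet. Qed.

Lemma of_subst_repl_diag i j x k s :
  f (subst D (repl i j) x) k s -> f (diag D i j) k s -> f x k s.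
Proof.
move=> fsx fd; apply: NNPP => nfx.
have := subst_repl_of_diag i j (bcompl D x) k s; rewrite f_compl P10 f_compl.
by apply.
Qed.

(* [a/b]z <= c_a z, because c_a z is invariant under [a/b] (P11). *)
Lemma subst_repl_le_cyl1 a b z k s : f (subst D (repl a b) z) k s -> f (cyl1 a z) k s.
Proof.
have fixed : subst D (repl a b) (cyl1 a z) = cyl1 a z.
  by rewrite /cyl1 (P11 _ id) ?P7 // => i; rewrite inE /repl => /negbTE ->.
have z_le : ble z (cyl1 a z).
  by apply/ble_sem => k' s' fz; apply/f_cyl1_upd; exists (s' a); rewrite upd_same.
by rewrite -fixed -z_le P9 f_join; left.
Qed.

Lemma cyl1_diag_full i j k s : i != j -> f (cyl1 i (diag D i j)) k s.
Proof.
move=> ij; apply: (subst_repl_le_cyl1 i j).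
by rewrite E1 /repl eqxx eq_sym (negbTE ij) E2 f_one.
Qed.

Lemma subst_repl_as_cyl1 i j x : i != j ->
  subst D (repl i j) x = cyl1 i (bmeet D (diag D i j) x).
Proof.
move=> ij; apply: f_inj => k w; split=> [fsx|].
  have := cyl1_diag_full i j k w ij; rewrite f_cyl1 => -[t [tw fd]].
  have fst : f (subst D (repl i j) x) k t.
    by rewrite -cyl1_subst_repl // f_cyl1; exists w; split=> // a ai; rewrite tw.
  rewrite f_cyl1; exists t; split=> //; rewrite f_meet; split=> //.
  exact: of_subst_repl_diag fst fd.
rewrite f_cyl1 => -[t [tw]]; rewrite f_meet => -[fd fx].
rewrite -cyl1_subst_repl // f_cyl1; exists t; split=> //.
exact: subst_repl_of_diag.
Qed.

Lemma diag_sym i j k s : f (diag D i j) k s -> f (diag D j i) k s.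
Proof.
move=> fd; apply: NNPP => nfd.
have := subst_repl_of_diag i j (bcompl D (diag D j i)) k s; rewrite f_compl P10 f_compl.
by rewrite E1 /repl eqxx if_same E2 f_one => /(_ nfd fd).
Qed.

Lemma diag_trans i j l k s : i != j ->
  f (diag D i j) k s -> f (diag D j l) k s -> f (diag D i l) k s.
Proof.
move=> ij fij fjl; have := subst_repl_of_diag j l (diag D i j) k s fij fjl.
by rewrite E1 /repl eqxx (negbTE ij).
Qed.

Hypothesis gen : generated_by (fun x : D => dimset_not_full x).

Lemma generated_ind (P : D -> Prop) :
  subuniverse P -> (forall l y, cyl1 l y = y -> P y) -> forall x, P x.
Proof. by move=> subP Pfree; apply: (gen P subP) => y /not_full_free [l]; apply: Pfree. Qed.

(* A point s0 of the unit is needed to show that every value has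
   a partner at every other coordinate. *)
Section Factor.
Variables (k : K) (s0 : forall i, U k i).

Definition same i j (u : U k i) (v : U k j) :=
  exists s : forall a, U k a, [/\ s i = u, s j = v & f (diag D i j) k s].

Lemma diag_local i j s s' :
  s i = s' i -> s j = s' j -> f (diag D i j) k s -> f (diag D i j) k s'.
Proof.
move=> si sj.
apply: (coordinatewise_ind (fun a x y => x = y \/ (a != i /\ a != j)) (f (diag D i j) k)).
  move=> t a u [<-|[ai aj]] ft; first by rewrite upd_same.
  by rewrite -(cyl1_diag _ _ _ ai aj) f_cyl1_upd; exists (t a); rewrite upd_upd upd_same.
move=> a; case: (eqVneq a i) => [->|ai]; first by left.
by case: (eqVneq a j) => [->|aj]; [left | right].
Qed.

Lemma same_diag i j s : same i j (s i) (s j) <-> f (diag D i j) k s.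
Proof. by split=> [[s' [s'i s'j fd]]|fd]; [apply: diag_local s'i s'j fd | exists s]. Qed.

Lemma same_sym i j u v : i != j -> same i j u v -> same j i v u.
Proof. by move=> _ [s [si sj fd]]; exists s; split=> //; apply: diag_sym. Qed.

Lemma same_total i j u : i != j -> exists v, same i j u v.
Proof.
move=> ij; have := cyl1_diag_full j i k (upd s0 i u) (neqC ij).
rewrite f_cyl1 => -[t [ts fd]]; exists (t j), t; split=> //.
  by rewrite ts // upd_eq.
exact: diag_sym.
Qed.

Lemma same_trans i j l u v w : i != j -> j != l -> i != l ->
  same i j u v -> same j l v w -> same i l u w.
Proof.
move=> ij jl il [s1 [s1i s1j fd1]] [s2 [s2j s2l fd2]].
exists (upd s2 i u); split; [exact: upd_eq | by rewrite upd_neq 1?eq_sym | ].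
apply: (diag_trans i j l k _ ij).
  by apply: (diag_local _ _ _ _ _ _ fd1); rewrite ?upd_eq // upd_neq ?(neqC ij) // s2j s1j.
by apply: (diag_local _ _ _ _ _ _ fd2); rewrite upd_neq // neqC.
Qed.

Definition ev := eqv n (U k) same.

Lemma ev_refl i u : ev i u i u.
Proof. exact: (eqv_refl n n3 (U k) same same_total). Qed.

Lemma ev_sym {i u j v} : ev i u j v -> ev j v i u.
Proof. exact: eqv_sym. Qed.

Lemma ev_trans {i u j v m x} : ev i u j v -> ev j v m x -> ev i u m x.
Proof. exact: (eqv_trans n n3 (U k) same same_sym same_total same_trans). Qed.

Lemma ev_same i u j v : i != j -> ev i u j v <-> same i j u v.
Proof. exact: (eqv_E n n3 (U k) same same_sym same_total same_trans). Qed.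

Lemma diag_ev a b s : f (diag D a b) k s <-> ev a (s a) b (s b).
Proof.
case: (eqVneq a b) => [<-|ab]; last by rewrite ev_same // same_diag.
by rewrite E2 f_one; split=> // _; apply: ev_refl.
Qed.

Definition respects x :=
  forall t i u, ev i (t i) i u -> f x k t -> f x k (upd t i u).

(* Elements with a free coordinate l respect ev: to change coordinate i <> l,
   pass through coordinate l using [i/l]y = c_i (d_il . y). *)
Lemma respects_free l y : cyl1 l y = y -> respects y.
Proof.
move=> ly t i u tu fy; case: (eqVneq l i) => [li|li].
  by subst l; rewrite -ly f_cyl1_upd; exists (t i); rewrite upd_upd upd_same.
have [v [tv uv]] := eqv_common_partner n n3 (U k) same same_sym same_total same_trans
  i (t i) u tu l li.
pose s1 := upd t l v; pose s2 := upd s1 i u.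
have fs1 : f y k s1 by rewrite -ly f_cyl1_upd; exists (t l); rewrite /s1 upd_upd upd_same.
have ds1 : f (diag D i l) k s1.
  by apply/same_diag; rewrite /s1 upd_eq upd_neq // neqC.
have ds2 : f (diag D i l) k s2.
  by apply/same_diag; rewrite /s2 upd_eq upd_neq // /s1 upd_eq.
have fs2 : f (subst D (repl i l) y) k s2.
  rewrite subst_repl_as_cyl1 1?neqC // f_cyl1_upd; exists (s1 i).
  by rewrite /s2 upd_upd upd_same f_meet.
have fy2 := of_subst_repl_diag _ _ _ _ _ fs2 ds2.
by rewrite -ly f_cyl1_upd; exists v; rewrite -upd_comm 1?eq_sym.
Qed.

Lemma respects_compl x : respects x -> respects (bcompl D x).
Proof.
move=> rx t i u tu; rewrite !f_compl => nfx fxu; apply: nfx.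
by have := rx (upd t i u) i (t i); rewrite upd_upd upd_same upd_eq; apply; first exact: ev_sym.
Qed.

Lemma respects_join x y : respects x -> respects y -> respects (bjoin D x y).
Proof. by move=> rx ry t i u tu; rewrite !f_join => -[fx|fy]; [left; apply: rx | right; apply: ry]. Qed.

Lemma respects_meet x y : respects x -> respects y -> respects (bmeet D x y).
Proof. by move=> rx ry t i u tu; rewrite !f_meet => -[fx fy]; split; [apply: rx | apply: ry]. Qed.

Lemma respects_cyl1 j x : respects x -> respects (cyl1 j x).
Proof.
move=> rx t i u tu; rewrite !f_cyl1_upd => -[u' fx].
case: (eqVneq i j) => [ij|ij]; first by subst j; exists u'; rewrite upd_upd.
by exists u'; rewrite -upd_comm //; apply: rx; rewrite // upd_neq.
Qed.

Lemma respects_diag a b : respects (diag D a b).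
Proof.
move=> t i u tu; rewrite !diag_ev => tab.
have moved c : ev c (t c) c (upd t i u c).
  case: (eqVneq c i) => [ci|ci]; first by subst c; rewrite upd_eq.
  by rewrite upd_neq //; apply: ev_refl.
exact: ev_trans (ev_sym (moved a)) (ev_trans tab (moved b)).
Qed.

(* Every element respects ev: the elements all of whose substitution
   instances respect ev form a subuniverse containing the generators. *)
Lemma respects_all x : respects x.
Proof.
suff: forall t, respects (subst D t x) by move/(_ id); rewrite P7.
move: x; apply: generated_ind.
  apply: subuniverse_of.
  - by move=> t s i u _; rewrite subst_zero !f_zero.
  - by move=> t s i u _ _; rewrite subst_one f_one.
  - by move=> x y rx ry t; rewrite P9; apply: respects_join.
  - by move=> x y rx ry t; rewrite subst_meet; apply: respects_meet.
  - by move=> x rx t; rewrite P10; apply: respects_compl.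
  - by move=> i x rx t; have [m [t' [_ _ _ ->]]] := subst_cyl1 t i x; apply: respects_cyl1.
  - by move=> s x rx t; rewrite -P8.
  - by move=> i j t; rewrite E1; apply: respects_diag.
move=> l y ly t; have [m my] := subst_free l y t ly; exact: respects_free my.
Qed.

Lemma f_respects_ev x s s' : (forall i, ev i (s i) i (s' i)) -> f x k s -> f x k s'.
Proof. by apply: (coordinatewise_ind (fun i a b => ev i a i b)); apply: respects_all. Qed.

(* The new base set W: the ev-classes, each represented as the family of
   predicates "is equivalent to (i, u)" on the coordinate sets. *)
Definition cls i (u : U k i) : forall j, U k j -> Prop := fun j v => ev j v i u.
Definition W := {C : forall j, U k j -> Prop | exists i u, C = cls i u}.
Definition mkW i (u : U k i) : W := exist _ (cls i u) (ex_intro _ i (ex_intro _ u erefl)).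

Lemma W_eq (C C' : W) : proj1_sig C = proj1_sig C' -> C = C'.
Proof. by case: C C' => [C p] [C' p'] /= eCC'; subst C'; rewrite (proof_irrelevance _ p p'). Qed.

Lemma mkW_eq i u j v : mkW i u = mkW j v <-> ev i u j v.
Proof.
split=> [/(f_equal (fun C : W => proj1_sig C i u))|uv].
  by rewrite /= /cls => <-; apply: ev_refl.
apply: W_eq; apply: functional_extensionality_dep => a; apply: functional_extensionality => x.
apply: propositional_extensionality; rewrite /= /cls.
by split=> xa; [apply: ev_trans xa uv | apply: ev_trans xa (ev_sym uv)].
Qed.

Lemma W_meets (C : W) i : exists u, mkW i u = C.
Proof.
have [j [v ->]] : exists j v, C = mkW j v.
  by case: C => C [j [v eC]]; exists j, v; apply: W_eq.
case: (eqVneq i j) => [->|ij]; first by exists v.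
have [u vu] := same_total j i v (neqC ij).
by exists u; apply/mkW_eq; rewrite ev_same //; apply: same_sym (neqC ij) vu.
Qed.

Definition rep (w : 'I_n -> W) : forall i, U k i :=
  fun i => proj1_sig (constructive_indefinite_description _ (W_meets (w i) i)).

Definition classes (s : forall i, U k i) : 'I_n -> W := fun i => mkW i (s i).

Lemma classes_rep w : classes (rep w) = w.
Proof.
apply: functional_extensionality => i; rewrite /classes /rep.
by case: (constructive_indefinite_description _ _).
Qed.

Definition fW x (w : 'I_n -> W) : Prop := f x k (rep w).

Lemma fW_classes x s : fW x (classes s) <-> f x k s.
Proof.
have rep_ev i : ev i (rep (classes s) i) i (s i).
  by apply/mkW_eq; move: (classes_rep (classes s)) => /(f_equal (fun w => w i)).
by split; apply: f_respects_ev => i //; apply: ev_sym.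
Qed.

Lemma fW_join x y w : fW (bjoin D x y) w <-> fW x w \/ fW y w.
Proof. exact: f_join. Qed.

Lemma fW_meet x y w : fW (bmeet D x y) w <-> fW x w /\ fW y w.
Proof. exact: f_meet. Qed.

Lemma fW_compl x w : fW (bcompl D x) w <-> ~ fW x w.
Proof. exact: f_compl. Qed.

Lemma fW_zero w : fW (bzero D) w <-> False.
Proof. exact: f_zero. Qed.

Lemma fW_one w : fW (bone D) w <-> True.
Proof. exact: f_one. Qed.

Lemma fW_cyl1 i x w :
  fW (cyl1 i x) w <-> exists t, (forall j, j != i -> t j = w j) /\ fW x t.
Proof.
rewrite {1}/fW f_cyl1_upd; split=> [[u fu]|[t [tw ft]]].
  exists (classes (upd (rep w) i u)); rewrite fW_classes; split=> // j ji.
  by rewrite /classes upd_neq // -/(classes (rep w) j) classes_rep.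
exists (rep t i); rewrite -fW_classes.
suff -> : classes (upd (rep w) i (rep t i)) = t by [].
apply: functional_extensionality => j; rewrite /classes.
case: (eqVneq j i) => [->|ji]; first by rewrite upd_eq -/(classes (rep t) i) classes_rep.
by rewrite upd_neq // -/(classes (rep w) j) classes_rep tw.
Qed.

Lemma fW_cyl G x w :
  fW (cyl D G x) w <-> exists t, (forall j, j \notin G -> t j = w j) /\ fW x t.
Proof. exact: (cyl_sem (fun _ => W) fW fW_cyl1). Qed.

Lemma fW_diag a b w : fW (diag D a b) w <-> w a = w b.
Proof. by rewrite /fW diag_ev -mkW_eq -!/(classes (rep w) _) classes_rep. Qed.

Definition subst_sound (t : 'I_n -> 'I_n) x :=
  forall w, fW (subst D t x) w <-> fW x (w \o t).

Lemma sound_id x : subst_sound id x.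
Proof. by move=> w; rewrite P7. Qed.

Lemma sound_comp s t x : subst_sound s (subst D t x) -> subst_sound t x -> subst_sound (s \o t) x.
Proof. by move=> ss st w; rewrite P8 ss st. Qed.

(* [i/j] is sound on every element, by [i/j]x = c_i (d_ij . x). *)
Lemma sound_repl i j x : subst_sound (repl i j) x.
Proof.
case: (eqVneq i j) => [<-|ij].
  have -> : repl i i = id by apply: functional_extensionality => a; rewrite /repl; case: eqP => [->|].
  exact: sound_id.
move=> w; rewrite subst_repl_as_cyl1 // fW_cyl1; split=> [[t [tw]]|xw].
  rewrite fW_meet fW_diag => -[tij xt].
  suff -> : w \o repl i j = t by [].
  apply: functional_extensionality => a; rewrite /= /repl.
  by case: (eqVneq a i) => [->|ai]; [rewrite tij tw // neqC | rewrite tw].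
exists (w \o repl i j); split=> [a ai|]; first by rewrite /= /repl (negbTE ai).
rewrite fW_meet fW_diag.
by rewrite /= /repl eqxx eq_sym (negbTE ij).
Qed.

Lemma sound_free {l y t r} : cyl1 l y = y -> (forall a, a != l -> t a = r a) ->
  subst_sound r y -> subst_sound t y.
Proof.
move=> ly tr sr w.
have -> : subst D t y = subst D r y by rewrite -ly /cyl1 (P11 t r) // => a; rewrite inE; apply: tr.
rewrite sr -ly !fW_cyl1.
by split=> -[s [sw ys]]; exists s; split=> // a al; rewrite sw //= tr.
Qed.

(* A transposition is a product of replacements off a third coordinate l,
   so it is sound on elements with free coordinate l. *)
Lemma sound_swap l y i j : cyl1 l y = y -> subst_sound (swap i j) y.
Proof.
move=> ly; case: (eqVneq i j) => [<-|ij].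
  have -> : swap i i = id by apply: functional_extensionality => a; rewrite /swap; case: eqP => [->|].
  exact: sound_id.
case: (eqVneq l i) => [li|li].
  subst l; apply: (sound_free ly _ (sound_repl j i y)) => a ai.
  by rewrite /swap /repl (negbTE ai).
case: (eqVneq l j) => [lj|lj].
  subst l; apply: (sound_free ly _ (sound_repl i j y)) => a aj.
  by rewrite /swap /repl (negbTE aj).
apply: (sound_free (r := repl l j \o (repl j i \o repl i l)) ly).
  move=> a al; rewrite /swap /repl /=.
  case: (eqVneq a i) => [ai|ai]; first by subst a; rewrite (negbTE lj) eqxx.
  case: (eqVneq a j) => [aj|aj]; first by subst a; rewrite (negbTE (neqC li)).
  by rewrite (negbTE al).
by apply: sound_comp; [|apply: sound_comp]; apply: sound_repl.
Qed.

Lemma sound_free_all t y : (exists l, cyl1 l y = y) -> subst_sound t y.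
Proof.
move: {2}(#|supp t|.+1) (ltnSn #|supp t|) => N.
elim: N t y => // N IH t y; rewrite ltnS => supp_t [l ly].
have [t_id|/set0Pn [i]] := eqVneq (supp t) set0.
  have -> : t = id.
    apply: functional_extensionality => a; apply/eqP.
    by move/setP/(_ a): t_id; rewrite !inE => /negbFE.
  exact: sound_id.
rewrite inE => ti; have [t1 [r [t_eq smaller factor]]] := supp_factor t i ti.
rewrite t_eq; apply: sound_comp.
  exact: (IH _ _ (leq_trans smaller supp_t) (subst_free l y r ly)).
by case: factor => ->; [apply: sound_repl | apply: sound_swap ly].
Qed.

(* Soundness passes from x to c_i x, through s_t c_i x = c_m s_t' x. *)
Lemma sound_cyl1 i x : (forall t, subst_sound t x) -> forall t, subst_sound t (cyl1 i x).
Proof.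
move=> sx t w; have [m [t' [t'i t'a tm ->]]] := subst_cyl1 t i x.
rewrite !fW_cyl1; split=> [[r [rw]]|[q [qw xq]]].
  rewrite sx => xr; exists (r \o t'); split=> // a ai.
  by rewrite /= t'a // rw // tm.
exists (fun b => if b == m then q i else w b); split=> [b /negbTE -> //|].
rewrite sx; suff -> : (fun b => if b == m then q i else w b) \o t' = q by [].
apply: functional_extensionality => a /=.
case: (eqVneq a i) => [->|ai]; first by rewrite t'i eqxx.
by rewrite t'a // (negbTE (tm a ai)) qw.
Qed.

Lemma sound_all t x : subst_sound t x.
Proof.
move: x t; apply: generated_ind.
  apply: subuniverse_of.
  - by move=> t w; rewrite subst_zero !fW_zero.
  - by move=> t w; rewrite subst_one !fW_one.
  - by move=> x y sx sy t w; rewrite P9 !fW_join sx sy.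
  - by move=> x y sx sy t w; rewrite subst_meet !fW_meet sx sy.
  - by move=> x sx t w; rewrite P10 !fW_compl sx.
  - exact: sound_cyl1.
  - by move=> s x sx t w; rewrite -P8 sx sx.
  - by move=> i j t w; rewrite E1 !fW_diag.
by move=> l y ly t; apply: sound_free_all; exists l.
Qed.
End Factor.

Hypothesis f_sup : forall X a, is_sup X a -> forall k s, f a k s <-> exists x, X x /\ f x k s.

(* The representation of D: one factor W k for each factor k of f with a
   nonempty unit, and x interpreted as fW x there. *)
Lemma complete_representation : completely_representable D.
Proof.
exists {k : K & forall i, U k i}, (fun ks => W (projT1 ks)),
  (fun x ks => fW (projT1 ks) (projT2 ks) x).
repeat match goal with |- _ /\ _ => split end.
- by move=> x y [k s0] w; apply: fW_join.
- by move=> x y [k s0] w; apply: fW_meet.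
- by move=> x [k s0] w; apply: fW_compl.
- by move=> [k s0] w; apply: fW_zero.
- by move=> [k s0] w; apply: fW_one.
- by move=> G x [k s0] w; apply: fW_cyl.
- by move=> t x [k s0] w; apply: sound_all.
- by move=> i j [k s0] w; apply: fW_diag.
- move=> x y xy; apply: f_inj => k s; rewrite -!(fW_classes k s).
  exact: xy (existT _ k s) (classes k s).
- by move=> X a sup_a [k s0] w; rewrite /= /fW (f_sup _ _ sup_a).
Qed.
End Representation.

Theorem mainTheorem6 (n : nat) (D : pea_sig n) :
  3 <= n ->
  is_PEA D ->
  generated_by (fun x : D => dimset_not_full x) ->
  df_completely_representable D ->
  completely_representable D.
Proof.
move=> n3 [_ [_ [_ [_ [P5 [P6 [P7 [P8 [P9 [P10 [P11 [P12 [E1 [E2 E3]]]]]]]]]]]]]] gen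
  [K [U [f [f_join [f_meet [f_compl [f_zero [f_one [f_cyl1 [f_inj f_sup]]]]]]]]]].
exact: (complete_representation n D n3 P5 P6 P7 P8 P9 P10 P11 P12 E1 E2 E3
  K U f f_join f_meet f_compl f_zero f_one f_cyl1 f_inj gen f_sup).
Qed.
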